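(* Let $G=(V,E)$ be a finite planar embedded graph with $V=\{1,\dots,n\}$, let $\mathbf{p}$ be a packing of $G$, and let $V=V^+\sqcup V^-\sqcup V^=\sqcup V^0$ be a partition. Suppose $\omega$ is an equilibrium stress on $(G,\mathbf{p})$ whose radial force sum $\omega_i=\sum_{j:(i,j)\in E}\omega_{ij}(r_i+r_j)$ is strictly positive for $i\in V^-$, strictly negative for $i\in V^+$, and $0$ for $i\in V^0$. Let $\mathbf{p}'=(x_1',y_1',r_1',\dots,x_n',y_n',r_n')\in\mathbb{R}^{3n}$ be any vector (not required to be an infinitesimal flex), and write $D_{ij}=(\mathbf{p}_i-\mathbf{p}_j)\cdot(\mathbf{p}_i'-\mathbf{p}_j')-(r_i+r_j)(r_i'+r_j')$ for $(i,j)\in E$. Suppose that: $D_{ij}\ge 0$ whenever $\omega_{ij}<0$ (the disks stay tangent or separate to first order); $D_{ij}\le 0$ whenever $\omega_{ij}>0$ (the disks stay tangent or overlap to first order); and $r_k'\ge 0$ for $k\in V^+$, $r_k'\le 0$ for $k\in V^-$, $r_k'=0$ for $k\in V^=$. Then $r_k'=0$ for every $k\in V^+\cup V^-$, and $D_{ij}=0$ for every edge $(i,j)$ with $\omega_{ij}\neq 0$.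
   Context: A packing of a planar embedded graph $G=(V,E)$ is a vector $\mathbf{p}=(x_1,y_1,r_1,\dots,x_n,y_n,r_n)\in\mathbb{R}^{3n}$ with all $r_i>0$ such that $(r_i+r_j)^2=(x_i-x_j)^2+(y_i-y_j)^2$ for every edge $(i,j)\in E$, and around each vertex the neighbors appear in the same counterclockwise order as in the given embedding; $\mathbf{p}_i=(x_i,y_i)$, $\mathbf{p}_i'=(x_i',y_i')$. A stress is a function $\omega:E\to\mathbb{R}$; it is an equilibrium stress if $\sum_{j:(i,j)\in E}\omega_{ij}(\mathbf{p}_i-\mathbf{p}_j)=0$ for every vertex $i$. *)

From HB Require Import structures.
From mathcomp Require Import all_boot all_order all_algebra.
From mathcomp Require Import all_classical all_reals all_analysis.
Set Implicit Arguments. Unset Strict Implicit. Unset Printing Implicit Defensive.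
Import Order.TTheory GRing.Theory Num.Theory.
Local Open Scope ring_scope.

(* A finite graph on V = {0,...,n-1} ('I_n) is given by a symmetric,
   irreflexive adjacency relation [E]; an (ordered) edge is a pair (i,j)
   with [E i j].  A combinatorial embedding is a rotation system [sigma]:
   [sigma i] lists the neighbours of [i] in counterclockwise cyclic order. *)

Definition rotation_system n (E : rel 'I_n) (sigma : 'I_n -> seq 'I_n) :=
  forall i, uniq (sigma i) /\ (forall j, (j \in sigma i) = E i j).

(* face-tracing permutation on darts (fixed on non-darts) *)
Definition face_step n (E : rel 'I_n) (sigma : 'I_n -> seq 'I_n)
  (d : 'I_n * 'I_n) : 'I_n * 'I_n :=
  if E d.1 d.2 then (d.2, next (sigma d.2) d.1) else d.

Definition darts n (E : rel 'I_n) : pred ('I_n * 'I_n) :=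
  [pred d | E d.1 d.2].

Definition num_faces n (E : rel 'I_n) sigma :=
  fcard (face_step E sigma) (darts E).

Definition num_components n (E : rel 'I_n) := n_comp E predT.

Definition num_isolated n (E : rel 'I_n) :=
  #|[pred i : 'I_n | ~~ [exists j, E i j]]|.

(* planar embedded graph: simple graph with a rotation system of genus 0
   on every connected component, i.e. Euler's formula
   V - E + F = 2 on each component (an isolated vertex counting one face),
   summed over the components. *)
Definition planar_embedded n (E : rel 'I_n) (sigma : 'I_n -> seq 'I_n) :=
  [/\ symmetric E, irreflexive E, rotation_system E sigma &
      (2 * (n + num_faces E sigma + num_isolated E)
        = 4 * num_components E + #|darts E|)%N].

(* Packing of the embedded graph: positive radii, tangency along edges, and
   around each vertex i the neighbours appear counterclockwise in the
   cyclic order [sigma i]: with theta j in [0, 2pi) the direction angle of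
   p_j - p_i, some rotation of [sigma i] is strictly increasing in theta. *)
Definition packing (R : realType) n (E : rel 'I_n) (sigma : 'I_n -> seq 'I_n)
  (x y r : 'I_n -> R) :=
  [/\ forall i, 0 < r i,
      forall i j, E i j ->
        (r i + r j) ^+ 2 = (x i - x j) ^+ 2 + (y i - y j) ^+ 2 &
      forall i, exists theta : 'I_n -> R,
        (forall j, E i j ->
           [/\ 0 <= theta j, theta j < 2 * pi,
               x j - x i = (r i + r j) * cos (theta j) &
               y j - y i = (r i + r j) * sin (theta j)]) /\
        exists k, sorted (fun a b => theta a < theta b) (rot k (sigma i))].

Definition equilibrium_stress (R : realType) n (E : rel 'I_n)
  (x y : 'I_n -> R) (w : 'I_n -> 'I_n -> R) :=
  forall i, \sum_(j | E i j) w i j * (x i - x j) = 0 /\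
            \sum_(j | E i j) w i j * (y i - y j) = 0.

Definition radial_force (R : realType) n (E : rel 'I_n) (r : 'I_n -> R)
  (w : 'I_n -> 'I_n -> R) (i : 'I_n) :=
  \sum_(j | E i j) w i j * (r i + r j).

Definition Dlin (R : realType) n (x y r x' y' r' : 'I_n -> R) (i j : 'I_n) :=
  (x i - x j) * (x' i - x' j) + (y i - y j) * (y' i - y' j)
  - (r i + r j) * (r' i + r' j).

Definition partition4 n (A B C D : {set 'I_n}) :=
  [/\ A :|: B :|: C :|: D = [set: 'I_n]%SET,
      [/\ [disjoint A & B], [disjoint A & C] & [disjoint A & D] ] &
      [/\ [disjoint B & C], [disjoint B & D] & [disjoint C & D] ] ].

From HB Require Import structures.
From mathcomp Require Import all_boot all_order all_algebra.
From mathcomp Require Import all_classical all_reals all_analysis.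
From mathcomp Require Import ring lra.
Set Implicit Arguments. Unset Strict Implicit. Unset Printing Implicit Defensive.
Import Order.TTheory GRing.Theory Num.Theory.
Local Open Scope ring_scope.

(* Pair the stress with the first-order change D_ij of the edge constraints.
   Each edge contributes once from each endpoint, and at a vertex i the
   positional part cancels because w is in equilibrium, leaving
   - r'_i * omega_i; hence sum_(i,j) w_ij D_ij = - 2 sum_i r'_i omega_i.
   The sign hypotheses make every w_ij D_ij and every r'_i omega_i
   nonpositive, so both sides vanish, and so does each of their terms.
   Neither tangency nor planarity enters: only the symmetry of E and w. *)

Lemma nsumr_eq0P (R : numDomainType) (I : finType) (P : pred I) (F : I -> R) :
  (forall i, P i -> F i <= 0) -> \sum_(i | P i) F i = 0 ->
  forall i, P i -> F i = 0.
Proof.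
move=> F_le0 sumF0 i Pi; apply/oppr_inj; rewrite oppr0.
apply: (psumr_eq0P (F := fun i => - F i)) Pi => [j Pj|].
- by rewrite oppr_ge0 F_le0.
- by rewrite sumrN sumF0 oppr0.
Qed.

Lemma sum_rel_symmetric (V : nmodType) (I : finType) (E : rel I)
    (F : I -> I -> V) : symmetric E ->
  \sum_i \sum_(j | E i j) F j i = \sum_i \sum_(j | E i j) F i j.
Proof.
move=> Esym; rewrite (eq_bigr _ (fun i _ => big_mkcond _ _)) exchange_big /=.
apply: eq_bigr => i _; rewrite [RHS]big_mkcond.
by apply: eq_bigr => j _; rewrite Esym.
Qed.

Lemma mulr_opposite_signs_le0 (R : realDomainType) (a d : R) :
  (a < 0 -> 0 <= d) -> (0 < a -> d <= 0) -> a * d <= 0.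
Proof.
move=> d_ge0 d_le0; case: (ltgtP a 0) => [a_lt0|a_gt0|->].
- by rewrite mulr_le0_ge0 ?(ltW a_lt0) ?d_ge0.
- by rewrite mulr_ge0_le0 ?(ltW a_gt0) ?d_le0.
- by rewrite mul0r.
Qed.

Lemma partition4_cover n (A B C D : {set 'I_n}) : partition4 A B C D ->
  forall k, [|| k \in A, k \in B, k \in C | k \in D].
Proof.
case=> cover _ _ k; have : k \in [set: 'I_n] by rewrite inE.
by rewrite -cover !inE -!orbA.
Qed.

Lemma stress_Dlin_sum (R : realType) n (E : rel 'I_n) (x y r : 'I_n -> R)
    (w : 'I_n -> 'I_n -> R) (x' y' r' : 'I_n -> R) :
  symmetric E -> (forall i j, w i j = w j i) -> equilibrium_stress E x y w ->
  \sum_i \sum_(j | E i j) w i j * Dlin x y r x' y' r' i j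
    = - (2 * \sum_i r' i * radial_force E r w i).
Proof.
move=> Esym wsym weq.
pose A i j := w i j * (x i - x j) * x' i + w i j * (y i - y j) * y' i
              - w i j * (r i + r j) * r' i.
have wD_split i j : w i j * Dlin x y r x' y' r' i j = A i j + A j i.
  by rewrite /A /Dlin (wsym j i); ring.
have A_vertex_sum i : \sum_(j | E i j) A i j = - (r' i * radial_force E r w i).
  rewrite !big_split /= !sumrN -!mulr_suml.
  by case: (weq i) => -> ->; rewrite /radial_force; ring.
under eq_bigr => i _ do rewrite (eq_bigr _ (fun j _ => wD_split i j)) big_split.
rewrite big_split /= (sum_rel_symmetric A) //.
under eq_bigr => i _ do rewrite A_vertex_sum.
by rewrite sumrN; ring.
Qed.

Theorem mainTheorem2 (R : realType) (n : nat) (E : rel 'I_n)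
  (sigma : 'I_n -> seq 'I_n) (hG : planar_embedded E sigma)
  (x y r : 'I_n -> R) (hp : packing E sigma x y r)
  (Vp Vm Veq V0 : {set 'I_n}) (hpart : partition4 Vp Vm Veq V0)
  (w : 'I_n -> 'I_n -> R) (hwsym : forall i j, w i j = w j i)
  (heq : equilibrium_stress E x y w)
  (hVm : forall i, i \in Vm -> 0 < radial_force E r w i)
  (hVp : forall i, i \in Vp -> radial_force E r w i < 0)
  (hV0 : forall i, i \in V0 -> radial_force E r w i = 0)
  (x' y' r' : 'I_n -> R)
  (hneg : forall i j, E i j -> w i j < 0 -> 0 <= Dlin x y r x' y' r' i j)
  (hpos : forall i j, E i j -> 0 < w i j -> Dlin x y r x' y' r' i j <= 0)
  (hrp : forall k, k \in Vp -> 0 <= r' k)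
  (hrm : forall k, k \in Vm -> r' k <= 0)
  (hreq : forall k, k \in Veq -> r' k = 0) :
  (forall k, k \in Vp :|: Vm -> r' k = 0) /\
  (forall i j, E i j -> w i j != 0 -> Dlin x y r x' y' r' i j = 0).
Proof.
case: hG => Esym _ _ _.
set D := Dlin x y r x' y' r'; set om := radial_force E r w.
have wD_le0 i j : E i j -> w i j * D i j <= 0.
  by move=> Eij; apply: mulr_opposite_signs_le0; [apply: hneg | apply: hpos].
have rom_le0 k : xpredT k -> r' k * om k <= 0.
  move=> _; case/or4P: (partition4_cover hpart k) => Vk.
  - by rewrite mulr_ge0_le0 ?hrp ?(ltW (hVp _ Vk)).
  - by rewrite mulr_le0_ge0 ?hrm ?(ltW (hVm _ Vk)).
  - by rewrite hreq ?mul0r.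
  - by rewrite /om hV0 ?mulr0.
have inner_le0 i : xpredT i -> \sum_(j | E i j) w i j * D i j <= 0.
  by move=> _; apply: sumr_le0 => j; apply: wD_le0.
have := stress_Dlin_sum r x' y' r' Esym hwsym heq; rewrite -/D -/om => energy.
have rom_sum_le0 := sumr_le0 (index_enum _) rom_le0.
have energy_le0 := sumr_le0 (index_enum _) inner_le0.
rewrite energy in energy_le0.
have rom0 : \sum_i r' i * om i = 0 by lra.
have wD0 : \sum_i \sum_(j | E i j) w i j * D i j = 0 by rewrite energy rom0; lra.
split=> [k Vk | i j Eij wij_neq0].
- have /eqP := nsumr_eq0P rom_le0 rom0 (i := k) isT.
  rewrite mulf_eq0 => /orP[/eqP // | /eqP om0].
  by move: Vk; rewrite inE => /orP[/hVp|/hVm]; rewrite -/om om0 ltxx.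
- have /eqP := nsumr_eq0P (wD_le0 i) (nsumr_eq0P inner_le0 wD0 (i := i) isT) Eij.
  by rewrite mulf_eq0 (negbTE wij_neq0) => /eqP.
Qed.
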